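(* Let $p$ be an odd prime, let $\Delta\in\mathbb{Z}$ with $\Delta\equiv 3\pmod 4$ be a quadratic non-residue modulo $p$, and let $\mathfrak{p}=p\mathbb{Z}[\sqrt{\Delta}]$. For $0\le k\le p-1$ let $a_k=k+\sqrt{\Delta}$, and let $B_p=\prod_{0\le k\le p-1}(1-a_k^{p-1})$. Then $$B_p^{\frac{p-1}{2}}\equiv 1\pmod{\mathfrak{p}}.$$ *)

From mathcomp Require Import all_boot all_order all_algebra.
Set Implicit Arguments. Unset Strict Implicit. Unset Printing Implicit Defensive.
Import Order.TTheory GRing.Theory Num.Theory.
Local Open Scope ring_scope.

(* Elements of Z[sqrt D] are represented as pairs (a, b) : int * int,
   standing for a + b * sqrt D. *)
Definition zq := (int * int)%type.

Definition zq_of_int (n : int) : zq := (n, 0).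
Definition zq_add (x y : zq) : zq := (x.1 + y.1, x.2 + y.2).
Definition zq_sub (x y : zq) : zq := (x.1 - y.1, x.2 - y.2).
(* (a + b sqrtD)(c + d sqrtD) = (ac + D bd) + (ad + bc) sqrtD *)
Definition zq_mul (D : int) (x y : zq) : zq :=
  (x.1 * y.1 + D * (x.2 * y.2), x.1 * y.2 + x.2 * y.1).
Definition zq_exp (D : int) (x : zq) (n : nat) : zq :=
  iter n (zq_mul D x) (zq_of_int 1).
Definition zq_prod (D : int) (s : seq zq) : zq :=
  foldr (zq_mul D) (zq_of_int 1) s.

(* x = y mod the ideal p Z[sqrt D]: p divides both coordinates of x - y. *)
Definition zq_cong (p : nat) (x y : zq) : Prop :=
  (p%:Z %| (x.1 - y.1))%Z /\ (p%:Z %| (x.2 - y.2))%Z.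

Definition qnonres (p : nat) (D : int) : Prop :=
  ~ exists x : int, (p%:Z %| (x ^+ 2 - D))%Z.

Definition a_k (k : nat) : zq := (k%:Z, 1).

Definition B_p (p : nat) (D : int) : zq :=
  zq_prod D [seq zq_sub (zq_of_int 1) (zq_exp D (a_k k) p.-1) | k <- iota 0 p].

From mathcomp Require Import all_boot all_order all_algebra.
From mathcomp Require Import all_fingroup all_solvable all_field.
From mathcomp Require Import ring.
Set Implicit Arguments.
Unset Strict Implicit.
Unset Printing Implicit Defensive.

Import GRing.Theory FinRing.Theory.
Local Open Scope ring_scope.

(* Reduce modulo p: Z[sqrt D]/p is F_p[X]/(X^2 - D), where the class s of X
   satisfies s^2 = D and, by Euler's criterion, s^p = -s.  For c in F_p the
   Frobenius gives (s + c)(1 - (s + c)^(p-1)) = (s + c) - (s + c)^p = 2s, so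
   multiplying over c yields (prod_c (s + c)) B_p = (2s)^p = -2s.  As
   prod_c (s + c) = s^p - s = -2s is a unit, B_p = 1 modulo p already, and so
   is every power of it. *)

Lemma nonsquare_expr_half_card (F : finFieldType) (d : F) :
  odd #|F| -> (forall x : F, x ^+ 2 != d) -> d ^+ (#|F|.-1)./2 = -1.
Proof.
move=> oddF d_nsq.
have cardE : #|F|.-1 = (#|F|./2).*2 by rewrite -{1}(odd_double_half #|F|) oddF.
rewrite cardE doubleK; set n := #|F|./2.
have n_gt0 : (0 < n)%N.
  by rewrite -double_gt0 -cardE -subn1 subn_gt0 finNzRing_gt1.
have [g gen_g] := cyclicP (field_unit_group_cyclic [set: {unit F}]).
have ord_g : #[g]%g = n.*2 by rewrite /order -gen_g card_finField_unit cardE.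
have d_unit : d \is a GRing.unit.
  by rewrite unitfE; apply: contraNneq (d_nsq 0) => ->; rewrite expr0n.
have [i d_gi] : exists i, d = val g ^+ i.
  have : FinRing.unit F d_unit \in <[g]>%g by rewrite -gen_g inE.
  by case/cycleP => i di; exists i; rewrite -val_unitX -di.
have gn : val g ^+ n = -1.
  have : (val g ^+ n) ^+ 2 = 1.
    by rewrite -exprM muln2 -val_unitX -ord_g expg_order.
  move/eqP; rewrite sqrf_eq1 => /orP[/eqP gn1 | /eqP //].
  have : (g ^+ n)%g == 1%g by rewrite -val_eqE val_unitX gn1.
  by rewrite -order_dvdn ord_g -muln2 -{2}[n]muln1 dvdn_pmul2l // dvdn1.
have odd_i : odd i.
  apply: contraNT (d_nsq (val g ^+ i./2)) => even_i.
  by rewrite d_gi -exprM muln2 -{2}(odd_double_half i) (negbTE even_i).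
by rewrite d_gi exprAC gn -signr_odd odd_i expr1.
Qed.

Lemma pnat_pchar_card (F : finFieldType) : [pchar F].-nat #|F|.
Proof.
have [q q_pr /abelem_pgroup qF] := is_abelemP (finField_is_abelem F).
have [|_ _ [m cardF]] := pgroup_pdiv qF.
  by apply/trivgPn; exists 1; rewrite ?inE ?oner_neq0.
rewrite cardsT in cardF.
rewrite (eq_pnat _ (pcharf_eq (card_finPcharP cardF q_pr))).
by rewrite cardF pnatX pnat_id.
Qed.

Section FiniteFieldAlgebra.

Variables (F : finFieldType) (A : comUnitAlgType F).
Local Notation q := #|F|.

Lemma exprD_card (a b : A) : (a + b) ^+ q = a ^+ q + b ^+ q.
Proof.
by apply: exprDn_pchar; rewrite (eq_pnat _ (pchar_lalg A)) pnat_pchar_card.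
Qed.

Lemma alg_expr_card (c : F) : c%:A ^+ q = c%:A :> A.
Proof. by rewrite -in_algE -rmorphXn expf_card. Qed.

Lemma prod_add_alg (x : A) : \prod_(c : F) (x + c%:A) = x ^+ q - x.
Proof.
have := congr1 (horner_alg x) (finField_genPoly F).
rewrite rmorphB rmorphXn /= horner_algX rmorph_prod /= => ->.
rewrite (reindex_inj oppr_inj) /=; apply: eq_bigr => c _.
by rewrite rmorphB /= horner_algX horner_algC scaleNr.
Qed.

Lemma prod_one_sub_expr_pred_card (x : A) :
    x ^+ q = - x -> x \is a GRing.unit -> 2%:R != 0 :> F ->
  \prod_(c : F) (1 - (x + c%:A) ^+ q.-1) = 1.
Proof.
move=> frob_x x_unit two_neq0; set B := \prod_(c : F) _.
have q_gt0 : (0 < q)%N by rewrite (ltn_trans _ (finNzRing_gt1 F)).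
have two_alg : 2%:R = in_alg A 2%:R by rewrite rmorph_nat.
have two_q : 2%:R ^+ q = 2%:R :> A by rewrite two_alg in_algE alg_expr_card.
have factorE c : (x + c%:A) * (1 - (x + c%:A) ^+ q.-1) = 2%:R * x.
  rewrite mulrBr mulr1 -exprS prednK // exprD_card frob_x alg_expr_card.
  by ring.
have u_unit : - (2%:R * x) \is a GRing.unit.
  by rewrite unitrN unitrM x_unit andbT two_alg rmorph_unit // unitfE.
have prod_eq : (x ^+ q - x) * B = (2%:R * x) ^+ q.
  rewrite -prod_add_alg -big_split (eq_bigr _ (fun c _ => factorE c)).
  by rewrite prodr_const cardT -cardE.
rewrite exprMn two_q frob_x mulrN (_ : - x - x = - (2%:R * x)) in prod_eq;
  last by ring.
by apply: (mulrI u_unit); rewrite mulr1.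
Qed.

End FiniteFieldAlgebra.

Section QuadraticQuotient.

Variables (F : fieldType) (d : F).
Local Notation h := ('X^2 - d%:P).
Local Notation K := {poly %/ h}.

Lemma mk_monic_X2_subC : mk_monic h = h.
Proof. by rewrite /mk_monic size_XnsubC // monicXnsubC. Qed.

Lemma qpolyX_sqr : 'qX ^+ 2 = d%:A :> K.
Proof.
apply/eqP; rewrite -subr_eq0 -rmorphXn.
rewrite -(rmorph_alg (in_qpoly h)) -rmorphB alg_polyC.
apply/eqP/val_inj => /=.
by rewrite mk_monic_X2_subC Pdiv.RingMonic.rmodpp // monicXnsubC.
Qed.

Lemma qpolyX_unit : d != 0 -> ('qX : K) \is a GRing.unit.
Proof.
move=> d_neq0; apply/unitrPr; exists ((d^-1)%:A * 'qX).
by rewrite mulrCA -expr2 qpolyX_sqr -scalerAl mul1r scalerA mulVf ?scale1r.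
Qed.

Definition qpoly_lin (a b : F) : K := in_alg K a + in_alg K b * 'qX.

Lemma qpoly_lin_sub (a b a' b' : F) :
  qpoly_lin a b - qpoly_lin a' b' = qpoly_lin (a - a') (b - b').
Proof. by rewrite /qpoly_lin; ring. Qed.

Lemma qpoly_lin_mul (a b a' b' : F) :
  qpoly_lin a b * qpoly_lin a' b' =
  qpoly_lin (a * a' + d * (b * b')) (a * b' + b * a').
Proof.
rewrite /qpoly_lin.
have -> : in_alg K (a * a' + d * (b * b')) =
          in_alg K (a * a') + in_alg K (b * b') * 'qX ^+ 2.
  by rewrite qpolyX_sqr -in_algE -rmorphM -rmorphD (mulrC d).
ring.
Qed.

Lemma qpoly_lin_eq0 (a b : F) : (qpoly_lin a b == 0) = (a == 0) && (b == 0).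
Proof.
apply/idP/andP => [/eqP ab0 | [/eqP-> /eqP->]];
  last by rewrite /qpoly_lin !rmorph0 mul0r addr0.
have valE : a%:P + b%:P * 'X = 0 :> {poly F}.
  have qpolyE : in_qpoly h (a%:P + b%:P * 'X) = qpoly_lin a b.
    rewrite rmorphD rmorphM /= -(alg_polyC a) -(alg_polyC b).
    by rewrite !(rmorph_alg (in_qpoly h)).
  rewrite -[LHS](@in_qpoly_small _ h) ?qpolyE ?ab0 //.
  rewrite mk_monic_X2_subC size_XnsubC //.
  by rewrite addrC size_MXaddC; case: ifP => // _; rewrite !ltnS size_polyC_leq1.
have := congr1 (coefp 0) valE; have := congr1 (coefp 1) valE.
by rewrite /= !coefD !coefMX !coefC /= add0r addr0 => -> ->.
Qed.

End QuadraticQuotient.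

Lemma qpolyX_expr_card (F : finFieldType) (d : F) :
    odd #|F| -> (forall x : F, x ^+ 2 != d) ->
  'qX ^+ #|F| = - 'qX :> {poly %/ 'X^2 - d%:P}.
Proof.
move=> oddF d_nsq.
have cardE : #|F| = ((#|F|.-1)./2).*2.+1.
  by rewrite -{1 2}(odd_double_half #|F|) oddF add1n /= doubleK.
rewrite cardE (exprS (qpolyX ('X^2 - d%:P))) -mul2n exprM qpolyX_sqr.
rewrite -in_algE -rmorphXn.
by rewrite nonsquare_expr_half_card // rmorphN1 mulrN1.
Qed.

Lemma big_iota_Fp (p : nat) (R : Type) (idx : R) (op : Monoid.com_law idx)
    (f : 'F_p -> R) :
  prime p -> \big[op/idx]_(k <- iota 0 p) f k%:R = \big[op/idx]_(c : 'F_p) f c.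
Proof.
move=> p_pr; have -> : iota 0 p = index_iota 0 (Zp_trunc (pdiv p)).+2.
  by rewrite Fp_cast // /index_iota subn0.
by rewrite big_mkord; apply: eq_bigr => i _; rewrite natr_Zp.
Qed.

Lemma qnonres_nonsquare (p : nat) (D : int) :
  prime p -> qnonres p D -> forall x : 'F_p, x ^+ 2 != D%:~R.
Proof.
move=> p_pr D_nonres x; apply/eqP => x2D; apply: D_nonres; exists (x : nat).
rewrite (dvdz_pcharf (pchar_Fp p_pr)) rmorphB rmorphXn /= -x2D.
by rewrite -[in X in _ - X](natr_Zp x) subrr.
Qed.

Section ReductionModp.

Variables (p : nat) (D : int).
Local Notation d := (D%:~R : 'F_p).

Definition qpoly_of_zq (x : zq) := qpoly_lin d x.1%:~R x.2%:~R.

Lemma qpoly_of_zq_one : qpoly_of_zq (zq_of_int 1) = 1.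
Proof.
by rewrite /qpoly_of_zq /qpoly_lin /= mulr0z scale0r mul0r addr0 rmorph1 scale1r.
Qed.

Lemma qpoly_of_zq_sub x y :
  qpoly_of_zq (zq_sub x y) = qpoly_of_zq x - qpoly_of_zq y.
Proof. by rewrite /qpoly_of_zq qpoly_lin_sub !intrB. Qed.

Lemma qpoly_of_zq_mul x y :
  qpoly_of_zq (zq_mul D x y) = qpoly_of_zq x * qpoly_of_zq y.
Proof. by rewrite /qpoly_of_zq qpoly_lin_mul /= !(intrD, intrM). Qed.

Lemma qpoly_of_zq_exp x n : qpoly_of_zq (zq_exp D x n) = qpoly_of_zq x ^+ n.
Proof.
elim: n => [|n IHn]; first exact: qpoly_of_zq_one.
by rewrite /zq_exp iterS -/(zq_exp D x n) qpoly_of_zq_mul IHn -exprS.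
Qed.

Lemma qpoly_of_zq_prod s :
  qpoly_of_zq (zq_prod D s) = \prod_(x <- s) qpoly_of_zq x.
Proof.
elim: s => [|x s IHs]; first by rewrite big_nil qpoly_of_zq_one.
by rewrite big_cons /= qpoly_of_zq_mul -/(zq_prod D s) IHs.
Qed.

Lemma qpoly_of_zq_a_k k : qpoly_of_zq (a_k k) = 'qX + (k%:R : 'F_p)%:A.
Proof.
by rewrite /qpoly_of_zq /qpoly_lin /= rmorph1 scale1r mul1r [RHS]addrC.
Qed.

Lemma qpoly_of_zq_B_p : prime p ->
  qpoly_of_zq (B_p p D) = \prod_(c : 'F_p) (1 - ('qX + c%:A) ^+ #|'F_p|.-1).
Proof.
move=> p_pr; rewrite /B_p qpoly_of_zq_prod big_map card_Fp // -big_iota_Fp //.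
apply: eq_bigr => k _.
by rewrite qpoly_of_zq_sub qpoly_of_zq_one qpoly_of_zq_exp qpoly_of_zq_a_k.
Qed.

Lemma qpoly_of_zq_eq_cong x y : prime p ->
  qpoly_of_zq x = qpoly_of_zq y -> zq_cong p x y.
Proof.
move=> p_pr /eqP; rewrite -subr_eq0 -qpoly_of_zq_sub qpoly_lin_eq0 /=.
by case/andP; split; rewrite (dvdz_pcharf (pchar_Fp p_pr)).
Qed.

End ReductionModp.

Theorem lemma2p2 (p : nat) (D : int) :
  prime p -> odd p ->
  (D %% 4)%Z = 3 ->
  qnonres p D ->
  zq_cong p (zq_exp D (B_p p D) (p.-1)./2) (zq_of_int 1).
Proof.
(* D = 3 mod 4 only makes Z[sqrt D] a ring of integers in the paper. *)
move=> p_pr p_odd _ D_nonres.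
have D_nsq := qnonres_nonsquare p_pr D_nonres.
have D_neq0 : D%:~R != 0 :> 'F_p.
  by apply: contraNneq (D_nsq 0) => ->; rewrite expr0n.
have two_neq0 : 2%:R != 0 :> 'F_p.
  rewrite -(dvdn_pcharf (pchar_Fp p_pr)) dvdn_prime2 //.
  by apply: contraL p_odd => /eqP->.
apply: (qpoly_of_zq_eq_cong (D := D) p_pr).
rewrite qpoly_of_zq_exp qpoly_of_zq_B_p // prod_one_sub_expr_pred_card //.
- by rewrite expr1n qpoly_of_zq_one.
- by apply: qpolyX_expr_card; rewrite ?card_Fp.
- exact: qpolyX_unit.
Qed.
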